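(* Let $\Gamma$ be a connected finite simple graph on $N\ge3$ vertices with $\varepsilon>\frac12$. If $u\ne v$ are vertices with $\mathcal N(u)\cap\mathcal N(v)\ne\emptyset$, then $\mathcal N(u)\triangle\mathcal N(v)\ne\emptyset$ and $$\sum_{w\in\mathcal N(u)\triangle\mathcal N(v)}\Big(\frac{1}{\deg w}-\frac14\Big)>\frac12.$$
   Context: For a finite simple graph $\Gamma=(V,E)$ without isolated vertices, $\deg v$ is the number of neighbours of $v$ and $\mathcal N(v)=\{w\in V: w\sim v\}$; $\triangle$ denotes symmetric difference of sets. The normalized Laplacian acts on functions $f:V\to\mathbb R$ by $\Delta f(v)=f(v)-\frac{1}{\deg v}\sum_{w\sim v}f(w)$; its eigenvalues are $0=\lambda_1\le\lambda_2\le\dots\le\lambda_N$, and $\varepsilon:=\min_i|1-\lambda_i|$. *)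

From HB Require Import structures.
From mathcomp Require Import all_boot all_order all_algebra.
From mathcomp Require Import reals.
Set Implicit Arguments. Unset Strict Implicit. Unset Printing Implicit Defensive.
Import Order.TTheory GRing.Theory Num.Theory.
Local Open Scope ring_scope.

Section Graph.
Variable n : nat.
Variable adj : rel 'I_n.

Definition simple_graph : Prop := symmetric adj /\ irreflexive adj.

Definition connected_graph : Prop := forall u v : 'I_n, connect adj u v.

Definition nbhd (v : 'I_n) : {set 'I_n} := [set w | adj v w].
Definition deg (v : 'I_n) : nat := #|nbhd v|.

Definition symdiff (A B : {set 'I_n}) : {set 'I_n} := (A :\: B) :|: (B :\: A).

Variable R : realType.

Definition norm_laplacian (f : 'I_n -> R) (v : 'I_n) : R :=
  f v - (deg v)%:R^-1 * \sum_(w in nbhd v) f w.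

Definition lap_eigenvalue (lam : R) : Prop :=
  exists f : 'I_n -> R, (exists v, f v != 0) /\
    forall v, norm_laplacian f v = lam * f v.
End Graph.

(* The random-walk operator P = I - Δ ([avg]) is self-adjoint for the
   degree-weighted inner product <f, g> = Σ deg w f(w) g(w) ([ddot]).
   A minimiser g of the Rayleigh quotient ‖Pf‖² / ‖f‖² on the unit sphere
   satisfies P²g = m g with m = ‖Pg‖²; then either Pg + √m g or g is an
   eigenfunction of P with eigenvalue ±√m, so the spectral gap ε > 1/2 gives
   √m > 1/2, i.e. 4 ‖Pf‖² > ‖f‖² for every f ≠ 0.  For f = δ_u - δ_v one
   computes ‖f‖² = deg u + deg v ≥ |N(u) △ N(v)| + 2 (using a common
   neighbour) and ‖Pf‖² = Σ_{w ∈ N(u) △ N(v)} 1 / deg w, which is the claim. *)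
From HB Require Import structures.
From mathcomp Require Import all_boot all_order all_algebra.
From mathcomp Require Import reals topology normedtype derive.
From mathcomp Require boolp classical_sets functions.
From mathcomp Require Import ring lra zify.
Set Implicit Arguments. Unset Strict Implicit. Unset Printing Implicit Defensive.
Import Order.TTheory GRing.Theory Num.Theory numFieldNormedType.Exports.
Local Open Scope ring_scope.

Lemma quad_ge0_lin_coef0 (R : realFieldType) (a b : R) :
  (forall t, 0 <= a * t + b * t ^+ 2) -> a = 0.
Proof.
move=> ge0; have b1_gt0 : 0 < `|b| + 1 by rewrite ltr_wpDl.
pose s := (`|b| + 1)^-1; have s_gt0 : 0 < s by rewrite invr_gt0.
have bs_lt1 : b * s < 1.
  by rewrite ltr_pdivrMr // mul1r (le_lt_trans (ler_norm b)) // ltrDl.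
have := ge0 (- a * s).
have -> : a * (- a * s) + b * (- a * s) ^+ 2 = - (a ^+ 2 * (s * (1 - b * s))) by ring.
rewrite oppr_ge0 pmulr_lle0 ?mulr_gt0 ?subr_gt0 // => a2_le0.
by apply/eqP; rewrite -sqrf_eq0 eq_le a2_le0 sqr_ge0.
Qed.

Lemma continuous_sum (T : topologicalType) (R : realType) (I : Type) (r : seq I)
    (P : pred I) (F : I -> T -> R) :
  (forall i, continuous (F i)) -> continuous (fun x => \sum_(i <- r | P i) F i x).
Proof.
move=> cF; rewrite -functions.fct_sumE.
apply: (big_ind (fun f : T -> R => continuous f)) => [|f g cf cg x|i _].
- exact: cst_continuous.
- exact: continuousD (cf x) (cg x).
- exact: cF.
Qed.

Section RandomWalk.
Variables (R : realType) (n : nat) (adj : rel 'I_n).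
Hypothesis adj_sym : symmetric adj.
Hypothesis deg_gt0 : forall w, (0 < deg adj w)%N.

Definition avg (f : 'I_n -> R) (w : 'I_n) : R :=
  (deg adj w)%:R^-1 * \sum_(x in nbhd adj w) f x.

Definition ddot (f g : 'I_n -> R) : R := \sum_w (deg adj w)%:R * (f w * g w).

Definition dnorm2 (f : 'I_n -> R) : R := ddot f f.

Lemma norm_laplacianE f w : norm_laplacian adj f w = f w - avg f w.
Proof. by []. Qed.

Lemma deg_neq0 w : (deg adj w)%:R != 0 :> R.
Proof. by rewrite pnatr_eq0 -lt0n deg_gt0. Qed.

Lemma avg_add_scale f g t :
  avg (fun i => f i + t * g i) = (fun w => avg f w + t * avg g w).
Proof. by apply/boolp.funext => w; rewrite /avg big_split /= -mulr_sumr; ring. Qed.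

Lemma avg_scale f c : avg (fun i => c * f i) = (fun w => c * avg f w).
Proof. by apply/boolp.funext => w; rewrite /avg -mulr_sumr mulrCA. Qed.

Lemma sum_nbhd_delta w x : \sum_(i in nbhd adj w) ((i == x)%:R : R) = (adj w x)%:R.
Proof.
rewrite big_mkcond (bigD1 x) //= eqxx inE big1 ?addr0 => [|i /negbTE ix].
  by case: (adj w x).
by rewrite ix; case: ifP.
Qed.

Lemma ddot_delta f x : ddot f (fun i => (i == x)%:R) = (deg adj x)%:R * f x.
Proof.
rewrite /ddot (bigD1 x) //= eqxx mulr1 big1 ?addr0 // => w /negbTE ->.
by rewrite !mulr0.
Qed.

Lemma ddot_avgC f g : ddot (avg f) g = ddot f (avg g).
Proof.
rewrite /ddot /avg.
transitivity (\sum_w \sum_(x in nbhd adj w) f x * g w).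
  by apply: eq_bigr => w _; rewrite mulrA mulVKf ?deg_neq0 // mulr_suml.
transitivity (\sum_w \sum_(x in nbhd adj w) f w * g x); last first.
  by apply: eq_bigr => w _; rewrite mulrCA mulVKf ?deg_neq0 // mulr_sumr.
rewrite (exchange_big_dep xpredT) //=; apply: eq_bigr => x _.
by apply: eq_bigl => w; rewrite !inE adj_sym.
Qed.

Lemma dnorm2_add_scale f g t :
  dnorm2 (fun i => f i + t * g i) = dnorm2 f + 2 * t * ddot f g + t ^+ 2 * dnorm2 g.
Proof.
by rewrite /dnorm2 /ddot !mulr_sumr -!big_split /=; apply: eq_bigr => w _; ring.
Qed.

Lemma dnorm2_scale f c : dnorm2 (fun i => c * f i) = c ^+ 2 * dnorm2 f.
Proof. by rewrite /dnorm2 /ddot mulr_sumr; apply: eq_bigr => w _; ring. Qed.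

Lemma dnorm2_ge0 f : 0 <= dnorm2 f.
Proof. by apply: sumr_ge0 => w _; rewrite mulr_ge0 // -expr2 sqr_ge0. Qed.

Lemma dnorm2_gt0 f w : f w != 0 -> 0 < dnorm2 f.
Proof.
move=> fw; rewrite /dnorm2 /ddot (bigD1 w) //= ltr_pwDl //.
  by rewrite mulr_gt0 ?ltr0n ?deg_gt0 // -expr2 exprn_even_gt0.
by apply: sumr_ge0 => i _; rewrite mulr_ge0 // -expr2 sqr_ge0.
Qed.

Lemma dnorm2_neq0_exists f : dnorm2 f != 0 -> exists w, f w != 0.
Proof.
move=> nf; apply/existsP; apply: contraNT nf => /existsPn f0.
rewrite /dnorm2 /ddot big1 // => w _.
by move: (f0 w); rewrite negbK => /eqP ->; rewrite mul0r mulr0.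
Qed.

Lemma dnorm2_eq1_coord_bound f : dnorm2 f = 1 -> forall i, -1 <= f i <= 1.
Proof.
move=> f1 i; have fi_le : (deg adj i)%:R * f i ^+ 2 <= 1.
  rewrite -[leRHS]f1 /dnorm2 /ddot (bigD1 i) //= expr2 lerDl.
  by apply: sumr_ge0 => w _; rewrite mulr_ge0 // -expr2 sqr_ge0.
have deg_ge1 : 1 <= (deg adj i)%:R :> R by rewrite ler1n deg_gt0.
have sq_le1 : f i ^+ 2 <= 1 by nra.
by apply/andP; split; nra.
Qed.

Lemma dnorm2_normalize f :
  0 < dnorm2 f -> exists2 c, 0 < c & dnorm2 (fun i => c * f i) = 1.
Proof.
move=> f_gt0; exists (Num.sqrt (dnorm2 f))^-1; first by rewrite invr_gt0 sqrtr_gt0.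
by rewrite dnorm2_scale exprVn sqr_sqrtr ?ltW // mulVf // gt_eqF.
Qed.

Lemma avg_continuous (T : topologicalType) (F : T -> 'I_n -> R) :
  (forall i, continuous (F ^~ i)) -> forall w, continuous (fun x => avg (F x) w).
Proof.
move=> cF w x; rewrite /avg.
have sum_cont : continuous (fun y => \sum_(i in nbhd adj w) F y i).
  exact: continuous_sum.
exact: continuousM (@cst_continuous T R _ x) (sum_cont x).
Qed.

Lemma ddot_continuous (T : topologicalType) (F G : T -> 'I_n -> R) :
  (forall i, continuous (F ^~ i)) -> (forall i, continuous (G ^~ i)) ->
  continuous (fun x => ddot (F x) (G x)).
Proof.
move=> cF cG; apply: continuous_sum => w x.
exact: continuousM (@cst_continuous T R _ x) (continuousM (cF w x) (cG w x)).
Qed.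

Section RayleighMinimizer.
Import classical_sets.
Local Open Scope classical_set_scope.

(* Functions 'I_n -> R are encoded as row vectors so that the unit sphere is a
   closed subset of the compact box [-1, 1]^n in 'rV_n. *)
Lemma exists_rayleigh_minimizer (w0 : 'I_n) :
  exists g, dnorm2 g = 1 /\ forall f, dnorm2 (avg g) * dnorm2 f <= dnorm2 (avg f).
Proof.
pose vec (v : 'rV[R]_n) i := v ord0 i.
have vec_cont i : continuous (vec ^~ i) by exact: coord_continuous.
have vec_row (h : 'I_n -> R) : vec (\row_i h i) = h.
  by apply/boolp.funext => i; rewrite /vec mxE.
pose S := [set v : 'rV[R]_n | forall i, (fun=> `[-1, 1]) i (v ord0 i)]
          `&` [set v | dnorm2 (vec v) = 1].
have S_compact : compact S.
  apply: compact_closedI.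
    exact: (@rV_compact R n (fun=> `[-1, 1]) (fun=> @segment_compact R (-1) 1)).
  apply: (@preimage_closed _ _ (fun v => dnorm2 (vec v)) [set 1]); last exact: closed_eq.
  by move=> v _; exact: ddot_continuous.
have S_normalize f : 0 < dnorm2 f ->
    exists2 c, 0 < c & S (\row_i (c * f i)) /\ c ^+ 2 * dnorm2 f = 1.
  move=> /dnorm2_normalize [c c_gt0 cf1]; exists c => //.
  rewrite -dnorm2_scale; split=> //; split=> /=; last by rewrite vec_row.
  by move=> i; rewrite mxE /= in_itv /=; exact: dnorm2_eq1_coord_bound cf1 i.
have delta_gt0 : 0 < dnorm2 (fun i => (i == w0)%:R).
  by apply: (@dnorm2_gt0 _ w0); rewrite eqxx oner_eq0.
have [c0 _ [S_c0 _]] := S_normalize _ delta_gt0.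
have Q_cont : continuous (fun v => dnorm2 (avg (vec v))).
  by apply: ddot_continuous; exact: avg_continuous.
have [g /set_mem [_ g_unit] g_min] :=
  compact_EVT_min (ex_intro _ _ S_c0) S_compact (continuous_subspaceT Q_cont).
exists (vec g); split=> // f.
have [f0|f_neq0] := eqVneq (dnorm2 f) 0; first by rewrite f0 mulr0 dnorm2_ge0.
have f_gt0 : 0 < dnorm2 f by rewrite lt_def f_neq0 dnorm2_ge0.
have [c c_gt0 [S_cf cf1]] := S_normalize f f_gt0.
have := g_min _ (mem_set S_cf); rewrite vec_row avg_scale dnorm2_scale => Qg_le.
have := dnorm2_ge0 (avg f); nra.
Qed.

End RayleighMinimizer.

Section Minimizer.
Variable g : 'I_n -> R.
Hypothesis g_unit : dnorm2 g = 1.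
Hypothesis g_min : forall f, dnorm2 (avg g) * dnorm2 f <= dnorm2 (avg f).

Lemma minimizer_stationary h : ddot (avg g) (avg h) = dnorm2 (avg g) * ddot g h.
Proof.
set m := dnorm2 (avg g).
suff : 2 * (ddot (avg g) (avg h) - m * ddot g h) = 0.
  by move/eqP; rewrite mulf_eq0 pnatr_eq0 /= subr_eq0 => /eqP.
apply: (@quad_ge0_lin_coef0 _ _ (dnorm2 (avg h) - m * dnorm2 h)) => t.
have := g_min (fun i => g i + t * h i).
rewrite avg_add_scale !dnorm2_add_scale g_unit -/m; lra.
Qed.

Lemma minimizer_eigen x : avg (avg g) x = dnorm2 (avg g) * g x.
Proof.
apply: (mulfI (deg_neq0 x)); rewrite [RHS]mulrCA -!ddot_delta ddot_avgC.
exact: minimizer_stationary.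
Qed.

End Minimizer.

Section SpectralGap.
Hypothesis avg_eigen_gap : forall (f : 'I_n -> R) mu,
  (exists w, f w != 0) -> (forall w, avg f w = mu * f w) -> 1 / 2 < `|mu|.

Lemma avg2_eigen_gt_quarter g m : 0 <= m -> (exists w, g w != 0) ->
  (forall w, avg (avg g) w = m * g w) -> 1 / 4 < m.
Proof.
move=> m_ge0 g_nz g_eig; set s := Num.sqrt m.
have s_ge0 : 0 <= s := sqrtr_ge0 m.
have m_sq : m = s ^+ 2 by rewrite sqr_sqrtr.
suff : 1 / 2 < s by nra.
pose k w := avg g w + s * g w.
have [w kw|k0] := pickP (fun w => k w != 0).
  have /(avg_eigen_gap (ex_intro _ w kw)) : forall y, avg k y = s * k y.
    by move=> y; rewrite /k avg_add_scale /= g_eig m_sq; ring.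
  by rewrite ger0_norm.
have /(avg_eigen_gap g_nz) : forall y, avg g y = - s * g y.
  move=> y; move: (k0 y) => /negbFE/eqP; rewrite /k.
  by move/eqP; rewrite addr_eq0 mulNr => /eqP.
by rewrite normrN ger0_norm.
Qed.

Lemma dnorm2_lt_4_dnorm2_avg f :
  (exists w, f w != 0) -> dnorm2 f < 4 * dnorm2 (avg f).
Proof.
move=> [w fw]; have [g [g_unit g_min]] := exists_rayleigh_minimizer w.
have g_nz : exists v, g v != 0.
  by apply: dnorm2_neq0_exists; rewrite g_unit oner_eq0.
have := avg2_eigen_gt_quarter (dnorm2_ge0 _) g_nz (minimizer_eigen g_unit g_min).
have := g_min f; have := dnorm2_gt0 fw; nra.
Qed.

End SpectralGap.

Lemma dnorm2_delta_sub (u v : 'I_n) : u != v ->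
  dnorm2 (fun i => (i == u)%:R - (i == v)%:R) = (deg adj u)%:R + (deg adj v)%:R.
Proof.
move=> uv; rewrite -[(deg adj u)%:R]mulr1 -[(deg adj v)%:R]mulr1.
rewrite -!(ddot_delta (fun=> 1)) /dnorm2 /ddot -big_split /=.
apply: eq_bigr => w _.
have [->|_] := eqVneq w u; first by rewrite (negbTE uv) /=; ring.
by have [->|_] := eqVneq w v => /=; ring.
Qed.

Lemma dnorm2_avg_delta_sub (u v : 'I_n) :
  dnorm2 (avg (fun i => (i == u)%:R - (i == v)%:R)) =
  \sum_(w in symdiff (nbhd adj u) (nbhd adj v)) (deg adj w)%:R^-1.
Proof.
rewrite /dnorm2 /ddot [RHS]big_mkcond; apply: eq_bigr => w _.
rewrite /avg sumrB !sum_nbhd_delta /symdiff !inE (adj_sym w u) (adj_sym w v).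
have := deg_neq0 w.
by case: (adj u w); case: (adj v w) => /= d_neq0; field.
Qed.

End RandomWalk.

Lemma lap_eigenvalue_avg (R : realType) n (adj : rel 'I_n) (f : 'I_n -> R) mu :
  (exists w, f w != 0) -> (forall w, avg adj f w = mu * f w) ->
  lap_eigenvalue adj (1 - mu).
Proof.
by move=> f_nz f_eig; exists f; split=> // w; rewrite norm_laplacianE f_eig; ring.
Qed.

Lemma deg_gt0_of_connected n (adj : rel 'I_n) :
  connected_graph adj -> (1 < n)%N -> forall w, (0 < deg adj w)%N.
Proof.
move=> conn n_gt1 w.
have [x] : exists x, x \in [set~ w] by apply/card_gt0P; rewrite cardsC1 card_ord; lia.
rewrite !inE => xw; have [p wp x_last] := connectP (conn w x).
case: p wp x_last => [_ x_eq|y p /andP [wy _] _]; first by rewrite x_eq eqxx in xw.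
by apply/card_gt0P; exists y; rewrite inE.
Qed.

Lemma card_symdiff n (A B : {set 'I_n}) :
  (#|symdiff A B| + 2 * #|A :&: B| = #|A| + #|B|)%N.
Proof.
rewrite /symdiff cardsU.
have -> : (A :\: B) :&: (B :\: A) = set0.
  by apply/setP => x; rewrite !inE; case: (x \in A); case: (x \in B).
have := cardsID B A; have := cardsID A B; rewrite cards0 setIC; lia.
Qed.

Theorem mainTheorem14 (R : realType) (n : nat) (adj : rel 'I_n)
  (Hsimple : simple_graph adj) (Hconn : connected_graph adj) (HN : (3 <= n)%N)
  (Heps : forall lam : R, lap_eigenvalue adj lam -> 1 / 2 < `|1 - lam|)
  (u v : 'I_n) (Huv : u != v) (Hcommon : nbhd adj u :&: nbhd adj v != set0) :
  symdiff (nbhd adj u) (nbhd adj v) != set0 /\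
  1 / 2 < \sum_(w in symdiff (nbhd adj u) (nbhd adj v))
            ((deg adj w)%:R^-1 - 1 / 4 : R).
Proof.
have [adj_sym _] := Hsimple.
have deg_gt0 := deg_gt0_of_connected Hconn (ltnW HN).
have gap (f : 'I_n -> R) mu : (exists w, f w != 0) ->
    (forall w, avg adj f w = mu * f w) -> 1 / 2 < `|mu|.
  by move=> f_nz f_eig; have := Heps _ (lap_eigenvalue_avg f_nz f_eig); rewrite subKr.
have delta_nz : exists w, (w == u)%:R - (w == v)%:R != 0 :> R.
  by exists u; rewrite eqxx (negbTE Huv) /= subr0 oner_eq0.
have := dnorm2_lt_4_dnorm2_avg adj_sym deg_gt0 gap delta_nz.
rewrite dnorm2_delta_sub // dnorm2_avg_delta_sub // => deg_lt.
set sd := symdiff _ _ in deg_lt *.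
have card_le : (#|sd| + 2 <= deg adj u + deg adj v)%N.
  move: Hcommon (card_symdiff (nbhd adj u) (nbhd adj v)).
  by rewrite -card_gt0 -/sd /deg; lia.
have card_leR : #|sd|%:R + 2 <= (deg adj u)%:R + (deg adj v)%:R :> R.
  by rewrite -!natrD ler_nat.
have sum_gt : 1 / 2 < \sum_(w in sd) ((deg adj w)%:R^-1 - 1 / 4 : R).
  by rewrite sumrB sumr_const -mulr_natr; lra.
split=> //; apply: contraTneq sum_gt => ->; rewrite big_set0; lra.
Qed.
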